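(* Let $q>0$ be a constant and consider $$u_t=d_1\Delta u+u\left[\frac{(1-u)(u-p)}{1+qv}-av\right],\qquad v_t=d_2\Delta v+bv(1-v-cu)\quad\text{in }\Omega\times(0,\infty),$$ with $\partial_\nu u=\partial_\nu v=0$ on $\partial\Omega$. Let $(u^*,v^* )$ be a positive equilibrium of the kinetic system $\dot u=u[\frac{(1-u)(u-p)}{1+qv}-av]$, $\dot v=bv(1-v-cu)$ that is linearly asymptotically stable for the kinetic system (trace of the Jacobian negative, determinant positive). Then for all parameter values and all diffusion coefficients $d_1,d_2>0$, the spatially homogeneous steady state $(u^*,v^* )$ does not undergo diffusion-driven (Turing) instability: for every eigenvalue $\mu\ge0$ of $-\Delta$ with Neumann boundary conditions, all eigenvalues of $J(u^*,v^* )-\mu\,\mathrm{diag}(d_1,d_2)$ have negative real part, where $J(u^*,v^* )$ is the kinetic Jacobian.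
   Context: $\Omega\subset\mathbb{R}^n$ is a bounded domain with smooth boundary and outward normal $\nu$; $a,b,c>0$, $0\le p<1$. *)

From HB Require Import structures.
From mathcomp Require Import all_boot all_order all_algebra.
From mathcomp Require Import complex.
Set Implicit Arguments. Unset Strict Implicit. Unset Printing Implicit Defensive.
Import Order.TTheory GRing.Theory Num.Theory.
Local Open Scope ring_scope.

Section Model.
Variable R : rcfType.
Variables (a b c p q : R).

Definition kin_f (u v : R) : R := u * ((1 - u) * (u - p) / (1 + q * v) - a * v).
Definition kin_g (u v : R) : R := b * v * (1 - v - c * u).

(* Jacobian of (kin_f, kin_g): partial derivatives computed explicitly *)
Definition fu (u v : R) : R :=
  ((1 - u) * (u - p) / (1 + q * v) - a * v) + u * ((1 + p - 2 * u) / (1 + q * v)).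
Definition fv (u v : R) : R :=
  u * (- (q * ((1 - u) * (u - p))) / (1 + q * v) ^+ 2 - a).
Definition gu (u v : R) : R := - (b * c * v).
Definition gv (u v : R) : R := b * (1 - v - c * u) - b * v.

Definition kin_jac (u v : R) : 'M[R]_2 :=
  \matrix_(i < 2, j < 2)
    if i == 0 then (if j == 0 then fu u v else fv u v)
    else (if j == 0 then gu u v else gv u v).
End Model.

Definition diag2 (R : rcfType) (d1 d2 : R) : 'M[R]_2 :=
  \matrix_(i < 2, j < 2) (if i == j then (if i == 0 then d1 else d2) else 0).

Definition toCmx (R : rcfType) (M : 'M[R]_2) : 'M[R[i]]_2 :=
  map_mx (fun x => Complex x 0) M.

From HB Require Import structures.
From mathcomp Require Import all_boot all_order all_algebra.
From mathcomp Require Import complex.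
From mathcomp Require Import ring lra.
Import Order.TTheory GRing.Theory Num.Theory.
Local Open Scope ring_scope.

(* The argument is the classical Routh-Hurwitz one for 2x2 systems.
   1. A real 2x2 matrix with negative trace and positive determinant has
      all its (complex) eigenvalues in the open left half-plane: the
      eigenvalues are the roots of z^2 - tr z + det.
   2. If moreover both diagonal entries are nonpositive, subtracting a
      nonnegative diagonal matrix keeps the trace negative and the
      determinant positive.
   3. At a positive equilibrium of the kinetic system the Jacobian has
      sign pattern [[-, -], [-, -]]: g_v = -b v*, g_u = -b c v* and
      f_v < 0 follow from the equilibrium equations, and f_u < 0 is then
      forced by det J > 0.
   The theorem follows by applying 2 with diag(mu d1, mu d2), then 1. *)

Lemma mxtrace2 (R : comNzRingType) (A : 'M[R]_2) : \tr A = A 0 0 + A 1 1.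
Proof.
rewrite /mxtrace big_ord_recl big_ord1.
by have -> : lift (0 : 'I_2) (0 : 'I_1) = 1 by apply/val_inj.
Qed.

Lemma det2 (R : comNzRingType) (A : 'M[R]_2) :
  \det A = A 0 0 * A 1 1 - A 0 1 * A 1 0.
Proof.
rewrite (expand_det_row _ 0) big_ord_recl big_ord1 /cofactor !det_mx11 !mxE /=.
have lift01 : lift (0 : 'I_2) (0 : 'I_1) = 1 by apply/val_inj.
have lift10 : lift (1 : 'I_2) (0 : 'I_1) = 0 by apply/val_inj.
by rewrite lift01 lift10 expr0 expr1 mul1r mulN1r mulrN.
Qed.

Lemma eigenvalue2 (F : fieldType) (A : 'M[F]_2) z : eigenvalue A z ->
  (z - A 0 0) * (z - A 1 1) - A 0 1 * A 1 0 = 0.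
Proof.
rewrite eigenvalue_root_char /root /char_poly det2 /char_poly_mx !mxE /=.
by rewrite !hornerE /= mulrNN => /eqP.
Qed.

Section Hurwitz2.
Context {R : rcfType}.

(* A complex root of z^2 - (a + d) z + (a d - b c), with a + d < 0 and
   a d - b c > 0, has negative real part: a non-real root has real part
   (a + d) / 2, and a real root of a polynomial with positive coefficients
   is negative. *)
Lemma quadratic_root_Re_neg {x y a b c d : R} :
  (Complex x y - Complex a 0) * (Complex x y - Complex d 0)
    - Complex b 0 * Complex c 0 = 0 ->
  a + d < 0 -> 0 < a * d - b * c -> x < 0.
Proof.
move=> /eqP; rewrite eq_complex /= => /andP[/eqP hRe /eqP hIm] htr hdet.
rewrite ltNge; apply/negP => hx.
have real_root : y = 0.
  have : y * (2 * x - a - d) = 0 by rewrite -hIm; ring.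
  by move/eqP; rewrite mulf_eq0 => /orP[/eqP // | /eqP h]; lra.
by subst y; nra.
Qed.

Lemma hurwitz2_stable (M : 'M[R]_2) z :
  \tr M < 0 -> 0 < \det M -> eigenvalue (toCmx M) z -> complex.Re z < 0.
Proof.
rewrite mxtrace2 det2 => htr hdet /eigenvalue2; rewrite /toCmx !mxE.
by case: z => x y /= hroot; exact: (quadratic_root_Re_neg hroot htr hdet).
Qed.

Lemma scale_diag2 (mu d1 d2 : R) : mu *: diag2 d1 d2 = diag2 (mu * d1) (mu * d2).
Proof.
by apply/matrixP => i j; rewrite !mxE; case: (i == j); case: (i == 0);
  rewrite ?mulr0.
Qed.

Lemma hurwitz2_diag_shift {M : 'M[R]_2} {e1 e2 : R} :
  M 0 0 <= 0 -> M 1 1 <= 0 -> 0 <= e1 -> 0 <= e2 ->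
  \tr M < 0 -> 0 < \det M ->
  \tr (M - diag2 e1 e2) < 0 /\ 0 < \det (M - diag2 e1 e2).
Proof.
rewrite !mxtrace2 !det2 /diag2 !mxE /= !subr0 => h00 h11 he1 he2 htr hdet.
split; first by lra.
have expand : (M 0 0 - e1) * (M 1 1 - e2) - M 0 1 * M 1 0 =
  (M 0 0 * M 1 1 - M 0 1 * M 1 0) + e2 * - M 0 0 + e1 * - M 1 1 + e1 * e2
  by ring.
rewrite expand.
have : 0 <= e2 * - M 0 0 by rewrite mulr_ge0 // oppr_ge0.
have : 0 <= e1 * - M 1 1 by rewrite mulr_ge0 // oppr_ge0.
have := mulr_ge0 he1 he2; lra.
Qed.

End Hurwitz2.

Section PositiveEquilibrium.
Context {R : rcfType} {a b c p q us vs : R}.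
Hypotheses (ha : 0 < a) (hb : 0 < b) (hc : 0 < c) (hq : 0 < q).
Hypotheses (hus : 0 < us) (hvs : 0 < vs).
Hypotheses (heqf : kin_f a p q us vs = 0) (heqg : kin_g b c us vs = 0).

Lemma predator_nullcline : 1 - vs - c * us = 0.
Proof.
move/eqP: heqg; rewrite /kin_g !mulf_eq0 (gt_eqF hb) (gt_eqF hvs) /=.
by move/eqP.
Qed.

Lemma prey_nullcline : (1 - us) * (us - p) / (1 + q * vs) = a * vs.
Proof. by move/eqP: heqf; rewrite /kin_f mulf_eq0 (gt_eqF hus) subr_eq0 => /eqP. Qed.

Lemma gv_equilibrium : gv b c us vs = - (b * vs).
Proof. by rewrite /gv predator_nullcline; ring. Qed.

Lemma gu_equilibrium_neg : gu b c us vs < 0.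
Proof. by rewrite /gu oppr_lt0 !mulr_gt0. Qed.

Lemma fv_equilibrium_neg : fv a p q us vs < 0.
Proof.
have hden : 0 < 1 + q * vs by rewrite addr_gt0 ?mulr_gt0.
have growth_pos : 0 < (1 - us) * (us - p).
  rewrite -(divfK (lt0r_neq0 hden) ((1 - us) * (us - p))) prey_nullcline.
  by rewrite !mulr_gt0.
have fear_pos : 0 < q * ((1 - us) * (us - p)) / (1 + q * vs) ^+ 2.
  by rewrite divr_gt0 ?exprn_gt0 // mulr_gt0.
by rewrite /fv pmulr_rlt0 // mulNr -opprD oppr_lt0 addr_gt0.
Qed.

Lemma fu_equilibrium_neg :
  0 < \det (kin_jac a b c p q us vs) -> fu a p q us vs < 0.
Proof.
rewrite det2 /kin_jac !mxE /= gv_equilibrium => hdet.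
have hfvgu : 0 < fv a p q us vs * gu b c us vs.
  by rewrite -mulrNN mulr_gt0 // oppr_gt0 ?fv_equilibrium_neg ?gu_equilibrium_neg.
rewrite ltNge; apply/negP => hfu.
have := mulr_ge0 hfu (ltW (mulr_gt0 hb hvs)); lra.
Qed.

End PositiveEquilibrium.

Theorem mainTheorem17 (R : rcfType) (a b c p q : R)
  (ha : 0 < a) (hb : 0 < b) (hc : 0 < c) (hp0 : 0 <= p) (hp1 : p < 1) (hq : 0 < q)
  (us vs : R) (hus : 0 < us) (hvs : 0 < vs)
  (heqf : kin_f a p q us vs = 0) (heqg : kin_g b c us vs = 0)
  (htr : \tr (kin_jac a b c p q us vs) < 0)
  (hdet : 0 < \det (kin_jac a b c p q us vs))
  (d1 d2 : R) (hd1 : 0 < d1) (hd2 : 0 < d2) :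
  forall mu : R, 0 <= mu ->
  forall z : R[i],
    eigenvalue (toCmx (kin_jac a b c p q us vs - mu *: diag2 d1 d2)) z ->
    complex.Re z < 0.
Proof.
move=> mu hmu z; rewrite scale_diag2.
set J := kin_jac a b c p q us vs.
have J00 : J 0 0 <= 0.
  rewrite /J /kin_jac mxE /=.
  exact/ltW/(fu_equilibrium_neg ha hb hc hq hus hvs heqf heqg hdet).
have J11 : J 1 1 <= 0.
  rewrite /J /kin_jac mxE /= (gv_equilibrium hb hvs heqg) oppr_le0.
  exact/ltW/mulr_gt0.
have [htr_mu hdet_mu] := hurwitz2_diag_shift J00 J11
  (mulr_ge0 hmu (ltW hd1)) (mulr_ge0 hmu (ltW hd2)) htr hdet.
exact: hurwitz2_stable.
Qed.
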